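(* Let $T$ be a tree with exactly three pendant vertices $u_1,u_2,u_3$ and major vertex $m$, with $d(u_1,m)\equiv d(u_2,m)\equiv 1\pmod 3$. Then there exists an eigenvector $x$ of $L(T)$ with eigenvalue $1$ such that for every $k\in\{1,2,3\}$ and every vertex $v$ on the path $P_{u_k,m}$ with $d(v,u_k)\equiv 1\pmod 3$, one has $x(v)=0$.
   Context: $L(T)=D(T)-A(T)$ is the Laplacian matrix of $T$. A pendant vertex has degree $1$; a major vertex has degree at least $3$. $P_{r,s}$ is the path in $T$ from $r$ to $s$, and $d$ denotes distance. *)

From mathcomp Require Import all_boot all_order all_algebra.
Set Implicit Arguments. Unset Strict Implicit. Unset Printing Implicit Defensive.
Import GRing.Theory Num.Theory.

(* A simple graph on vertex set 'I_n is an irreflexive symmetric relation e. *)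
Section Graph.
Variable n : nat.
Variable e : rel 'I_n.

Definition deg (v : 'I_n) : nat := #|[set w | e v w]|.
Definition pendant (v : 'I_n) : bool := deg v == 1%N.
Definition major (v : 'I_n) : bool := (3 <= deg v)%N.

Definition connected : Prop := forall x y : 'I_n, connect e x y.
Definition acyclic : Prop :=
  forall c : seq 'I_n, uniq c -> (2 < size c)%N -> ~~ cycle e c.
Definition is_tree : Prop := connected /\ acyclic.

Definition dist (x y : 'I_n) : nat :=
  find (fun k => [exists p : k.-tuple 'I_n, path e x p && (last x p == y)])
       (iota 0 n.+1).

Definition on_path (r s v : 'I_n) : Prop :=
  exists p : seq 'I_n, [/\ path e r p, last r p = s, uniq (r :: p) & v \in r :: p].

Local Open Scope ring_scope.
Definition degmx (R : nzRingType) : 'M[R]_n := \matrix_(i, j) ((i == j)%:R * (deg i)%:R).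
Definition adjmx (R : nzRingType) : 'M[R]_n := \matrix_(i, j) (e i j)%:R.
Definition laplacian (R : nzRingType) : 'M[R]_n := degmx R - adjmx R.
End Graph.

From mathcomp Require Import all_boot all_order all_algebra.
From mathcomp Require Import zify.
Import GRing.Theory Num.Theory.

(* A tree with at most three leaves and a vertex m of degree >= 3 is a spider: three
   pairwise disjoint legs leave m, each ending at a leaf, and a vertex off a leg has no
   neighbour on it other than possibly m.  Along a leg, indexed by the distance d to its leaf, the
   equation L x = x is x(d+1) = x(d) - x(d-1) with x(0) = 1, whose solution
   1, 0, -1, -1, 0, 1, ... vanishes exactly when d = 1 (mod 3).  Put this solution on the
   legs ending at u1 and u2 and 0 on the third leg: both legs have length = 1 (mod 3), so
   x(m) = 0, and scaling the second leg makes the two values next to m cancel, which is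
   the equation at m. *)

Set Implicit Arguments.
Unset Strict Implicit.

Lemma find_iota_eq (P : pred nat) N i :
  i < N -> P i -> (forall j, j < i -> ~~ P j) -> find P (iota 0 N) = i.
Proof.
move=> iN Pi before_i.
have has_P : has P (iota 0 N) by apply/hasP; exists i => //; rewrite mem_iota.
case: (ltngtP (find P (iota 0 N)) i) => // cmp.
- have := nth_find 0 has_P; rewrite nth_iota ?add0n => [P_find|]; last first.
    by rewrite -{2}(size_iota 0 N) -has_find.
  by move: (before_i _ cmp); rewrite P_find.
- by have := before_find 0 cmp; rewrite nth_iota ?add0n ?Pi.
Qed.

Lemma size_uniq_ord n (s : seq 'I_n) : uniq s -> size s <= n.
Proof. by move/card_uniqP => <-; apply: leq_trans (max_card _) _; rewrite card_ord. Qed.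

Lemma last_rev_belast (T : Type) (x : T) p : last (last x p) (rev (belast x p)) = x.
Proof. by case: p => //= y p; rewrite rev_cons last_rcons. Qed.

Section PathCut.
Variable T : eqType.
Implicit Types (m w : T) (r : seq T).

Definition path_upto m r w := take (index w (m :: r)) r.
Definition path_from m r w := drop (index w (m :: r)) r.

Lemma index_le_size m w r : w \in m :: r -> index w (m :: r) <= size r.
Proof. by rewrite -index_mem. Qed.

Lemma cat_path_upto_from m r w : path_upto m r w ++ path_from m r w = r.
Proof. exact: cat_take_drop. Qed.

Lemma last_path_upto m r w : w \in m :: r -> last m (path_upto m r w) = w.
Proof.
move=> wr; rewrite /path_upto (last_nth m) size_takel ?index_le_size //.
case: (index w (m :: r)) (nth_index m wr) => //= i.
by rewrite nth_take.
Qed.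

Lemma size_path_upto m r w : w \in m :: r -> size (path_upto m r w) = index w (m :: r).
Proof. by move=> wr; rewrite size_takel ?index_le_size. Qed.

Lemma size_path_from m r w : size (path_from m r w) = size r - index w (m :: r).
Proof. exact: size_drop. Qed.

Lemma last_path_from m r w : w \in m :: r -> last w (path_from m r w) = last m r.
Proof. by move=> wr; rewrite -{2}(cat_path_upto_from m r w) last_cat last_path_upto. Qed.

Lemma mem_path_upto m r w : {subset path_upto m r w <= r}.
Proof. by move=> z; apply: mem_take. Qed.

Lemma mem_path_from m r w : {subset path_from m r w <= r}.
Proof. by move=> z; apply: mem_drop. Qed.

Lemma uniq_path_upto m r w : uniq (m :: r) -> uniq (m :: path_upto m r w).
Proof. exact: take_uniq (index w (m :: r)).+1. Qed.

Lemma uniq_path_from m r w : uniq (m :: r) -> w \in m :: r -> uniq (w :: path_from m r w).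
Proof.
move=> U wr; move: U; rewrite -{1}(cat_path_upto_from m r w) -cat_cons cat_uniq.
case/and3P=> _ disj U2; rewrite cons_uniq U2 andbT.
apply: contra disj => w_from; apply/hasP; exists w => //.
by rewrite -{1}(last_path_upto wr) mem_last.
Qed.

Definition pairwise_disjoint (Ls : seq (seq T)) :=
  {in Ls &, forall r r' : seq T, r != r' -> {in r, forall y, y \notin r'}}.

Variable e : rel T.

Lemma path_upto_path m r w : path e m r -> path e m (path_upto m r w).
Proof. exact: take_path. Qed.

Lemma path_from_path m r w : path e m r -> w \in m :: r -> path e w (path_from m r w).
Proof.
move=> P wr; move: P; rewrite -{1}(cat_path_upto_from m r w) cat_path.
by rewrite last_path_upto // => /andP[].
Qed.

End PathCut.

Section TreePaths.
Variables (n : nat) (e : rel 'I_n).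
Hypotheses (e_sym : symmetric e) (e_irr : irreflexive e) (e_acyclic : acyclic e).

Lemma rev_path_sym x p : path e (last x p) (rev (belast x p)) = path e x p.
Proof. by rewrite rev_path; apply: eq_path => u v /=; rewrite e_sym. Qed.

Lemma rev_simple_path x p : path e x p -> uniq (x :: p) ->
  exists q, [/\ path e (last x p) q, uniq (last x p :: q), last (last x p) q = x
              & last x p :: q = rev (x :: p)].
Proof.
move=> P U; have rev_xp : last x p :: rev (belast x p) = rev (x :: p).
  by rewrite [x :: p]lastI rev_rcons.
exists (rev (belast x p)); split=> //; last exact: last_rev_belast.
- by rewrite rev_path_sym.
- by rewrite rev_xp rev_uniq.
Qed.

(* Two distinct simple paths with the same ends would close a cycle. *)
Lemma tree_path_unique x p q : path e x p -> path e x q ->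
  uniq (x :: p) -> uniq (x :: q) -> last x p = last x q -> p = q.
Proof.
elim: p x q => [|a p IHp] x [|b q] //.
- by move=> _ _ _ /= /andP[+ _] lastq; rewrite lastq mem_last.
- by move=> _ _ /= /andP[+ _] _ lastp; rewrite -lastp mem_last.
move=> /= /andP[exa Pa] /andP[exb Pb] /andP[xap Ua] /andP[xbq Ub] last_eq.
have [eqab|neab] := eqVneq a b; first by subst b; rewrite (IHp a q Pa Pb Ua Ub last_eq).
exfalso; set W := p ++ rev (belast b q).
have PW : path e a W by rewrite cat_path Pa /= last_eq rev_path_sym.
have : last a W = b by rewrite last_cat last_eq last_rev_belast.
case: (shortenP PW) => s Ps Us sub_s last_s.
have xW : x \notin W.
  rewrite mem_cat mem_rev negb_or; apply/andP; split.
    by move: xap; rewrite inE negb_or => /andP[].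
  by apply/negP => /mem_belast; apply/negP.
apply: (negP (e_acyclic (c := x :: a :: s) _ _)).
- rewrite cons_uniq Us andbT inE negb_or; move: xap; rewrite inE negb_or.
  by case/andP=> -> _; apply: contra xW; apply: sub_s.
- by case: s Ps Us sub_s last_s => [|c s] //= _ _ _ last_s; rewrite -last_s eqxx in neab.
by rewrite /= exa rcons_path Ps last_s e_sym exb.
Qed.

Lemma dist_simple_path x p : path e x p -> uniq (x :: p) -> dist e x (last x p) = size p.
Proof.
move=> P U; rewrite /dist; apply: find_iota_eq.
- by rewrite ltnS ltnW // (size_uniq_ord U).
- by apply/existsP; exists (in_tuple p); rewrite /= P eqxx.
move=> j ltjp; apply/existsP => -[t /andP[Pt /eqP]].
case: (shortenP Pt) => s Ps Us sub_s last_s.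
have eq_sp := tree_path_unique Ps P Us U last_s.
suff : size s <= j by rewrite eq_sp leqNgt ltjp.
rewrite -(size_tuple t); apply: uniq_leq_size sub_s; by case/andP: Us.
Qed.

Lemma index_adjacent m r z w : path e m r -> uniq (m :: r) ->
  z \in m :: r -> w \in m :: r -> e z w ->
  index z (m :: r) < index w (m :: r) -> index w (m :: r) = (index z (m :: r)).+1.
Proof.
move=> P U zr wr ezw lt_zw.
have upto_w : rcons (path_upto m r z) w = path_upto m r w.
  apply: (@tree_path_unique m).
  - by rewrite rcons_path path_upto_path // last_path_upto.
  - exact: path_upto_path.
  - rewrite -rcons_cons rcons_uniq uniq_path_upto // andbT.
    have -> : m :: path_upto m r z = take (index z (m :: r)).+1 (m :: r) by [].
    by rewrite in_take // -leqNgt.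
  - exact: uniq_path_upto.
  - by rewrite last_rcons last_path_upto.
by have := congr1 size upto_w; rewrite size_rcons !size_path_upto.
Qed.

Lemma tree_path_end_neighbour x s c z : path e x (rcons s c) -> uniq (x :: rcons s c) ->
  e c z -> z \in x :: rcons s c -> z = last x s.
Proof.
move=> P U ecz zin.
have zc : z != c by apply: contraTneq ecz => ->; rewrite e_irr.
have cin : c \in x :: rcons s c by rewrite -rcons_cons mem_rcons mem_head.
have idx_c : index c (x :: rcons s c) = (size s).+1.
  by rewrite -{1}(last_rcons x s c) index_last // size_rcons.
have lt_zc : index z (x :: rcons s c) < index c (x :: rcons s c).
  rewrite ltn_neqAle; apply/andP; split.
    by apply: contra zc => /eqP idx; rewrite -(nth_index x zin) idx nth_index.
  by rewrite idx_c -(size_rcons s c) index_le_size.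
have idx_z : index z (x :: rcons s c) = size s.
  by have := index_adjacent P U zin cin _ lt_zc; rewrite e_sym idx_c => /(_ ecz) [].
by rewrite -(nth_index x zin) idx_z -rcons_cons nth_rcons /= ltnSn (last_nth x).
Qed.

Lemma extend_to_pendant x s : path e x s -> uniq (x :: s) -> s != [::] ->
  exists t, [/\ path e x (s ++ t), uniq (x :: s ++ t) & pendant e (last x (s ++ t))].
Proof.
have [k] := ubnP (n - size s); elim: k s => [//|k IHk] s lt_k P U s_nil.
have [pend|npend] := boolP (pendant e (last x s)); first by exists [::]; rewrite cats0.
case/lastP: s s_nil P U npend lt_k => [//|s c] _ P U npend lt_k.
rewrite last_rcons in npend.
have /andP[_ e_prev] : path e x s && e (last x s) c by rewrite -rcons_path.
have [z [ecz z_prev]] : exists z, e c z /\ z != last x s.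
  have : 1 < deg e c.
    have : 0 < deg e c by apply/card_gt0P; exists (last x s); rewrite inE e_sym.
    by move: npend; rewrite /pendant; case: (deg e c) => [|[]].
  case/card_gt1P => [u [v [+ + uv]]]; rewrite !inE => ecu ecv.
  have [u_prev|] := eqVneq u (last x s); last by exists u.
  by exists v; split => //; rewrite -u_prev eq_sym.
have z_new : z \notin x :: rcons s c.
  by apply: contra z_prev => zin; rewrite (tree_path_end_neighbour P U ecz zin).
have P' : path e x (rcons (rcons s c) z) by rewrite rcons_path P last_rcons.
have U' : uniq (x :: rcons (rcons s c) z) by rewrite -rcons_cons rcons_uniq z_new U.
have lt_k' : n - size (rcons (rcons s c) z) < k.
  by have := size_uniq_ord U'; move: lt_k; rewrite /= !size_rcons; lia.
have nil' : rcons (rcons s c) z != [::] by rewrite -size_eq0 size_rcons.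
have [t [Pt Ut pend_t]] := IHk _ lt_k' P' U' nil'.
by exists (z :: t); rewrite -cat_rcons.
Qed.

Lemma dist_to_start x p : path e x p -> uniq (x :: p) -> dist e (last x p) x = size p.
Proof.
move=> P U; have [q [Pq Uq last_q rev_q]] := rev_simple_path P U.
have /(congr1 size) := rev_q; rewrite size_rev /= => -[<-].
by rewrite -{2}last_q dist_simple_path.
Qed.

Lemma disjoint_branches m r r' : path e m r -> uniq (m :: r) ->
  path e m r' -> uniq (m :: r') -> head m r != head m r' -> {in r, forall y, y \notin r'}.
Proof.
move=> P U P' U' heads y yr; apply: contra heads => yr'.
have my : m != y by apply: contraTneq U => ->; rewrite /= yr.
have head_upto s : head m (path_upto m s y) = head m s.
  by rewrite /path_upto /= (negPf my); case: s.
have yr1 : y \in m :: r by rewrite inE yr orbT.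
have yr2 : y \in m :: r' by rewrite inE yr' orbT.
have last_eq : last m (path_upto m r y) = last m (path_upto m r' y).
  by rewrite !last_path_upto.
have := tree_path_unique (path_upto_path y P) (path_upto_path y P')
  (uniq_path_upto y U) (uniq_path_upto y U') last_eq.
by rewrite -(head_upto r) -(head_upto r') => ->.
Qed.

(* [leg m r]: r is a whole leg at m, i.e. every other leaf is reached from m avoiding r. *)
Definition leg m r := [/\ path e m r, uniq (m :: r) &
  forall l, pendant e l -> l = last m r \/
    exists r', [/\ path e m r', uniq (m :: r'), last m r' = l & {in r', forall y, y \notin r}]].

Lemma leg_neighbour m r w z : leg m r -> w \in r -> e w z -> z \in m :: r.
Proof.
case=> P U leaves wr ewz; apply: contraT => z_out.
have wmr : w \in m :: r by rewrite inE wr orbT.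
have wz : w != z by apply: contraNneq z_out => <-.
have Pz : path e w [:: z] by rewrite /= ewz.
have Uz : uniq [:: w; z] by rewrite /= inE wz.
have [t [Pt Ut pend_t]] := extend_to_pendant Pz Uz isT.
rewrite cat1s in Pt Ut pend_t.
case: (leaves _ pend_t) => [last_t | [r' [P' U' last_r' r'_out]]].
  have eq_t := tree_path_unique Pt (path_from_path P wmr) Ut (uniq_path_from U wmr)
    (etrans last_t (esym (last_path_from wmr))).
  have : z \in path_from m r w by rewrite -eq_t mem_head.
  by move/mem_path_from => zr; rewrite inE zr orbT in z_out.
have [q [Pq Uq last_q rev_q]] := rev_simple_path (path_upto_path w P) (uniq_path_upto w U).
rewrite last_path_upto // in Pq Uq last_q rev_q.
have Pc : path e w (q ++ r') by rewrite cat_path Pq last_q.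
have Uc : uniq (w :: q ++ r').
  have uniq_r' : uniq r' by case/andP: U'.
  rewrite -cat_cons cat_uniq Uq uniq_r' andbT.
  apply/hasPn => y yr'; rewrite rev_q mem_rev inE.
  apply/norP; split; first by apply: contraTneq U' => <-; rewrite /= yr'.
  by apply: contra (r'_out y yr'); apply: mem_path_upto.
have Lc : last w (q ++ r') = last w (z :: t) by rewrite last_cat last_q last_r'.
have /(congr1 (head w)) := tree_path_unique Pc Pt Uc Ut Lc.
case: q {Pq Uq Pc Uc Lc} last_q rev_q => [/= w_m _ _ | a q _ rev_q /= a_z].
  by move: U; rewrite /= -w_m wr.
have : z \in m :: path_upto m r w by rewrite -mem_rev -rev_q -a_z !inE eqxx orbT.
rewrite inE => /orP[/eqP z_m | /mem_path_upto zr].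
  by rewrite z_m mem_head in z_out.
by rewrite inE zr orbT in z_out.
Qed.

Lemma branch_to_pendant m b : e m b ->
  exists r, [/\ path e m r, uniq (m :: r), pendant e (last m r) & head m r = b].
Proof.
move=> emb; have mb : m != b by apply: contraTneq emb => ->; rewrite e_irr.
have Pb : path e m [:: b] by rewrite /= emb.
have Ub : uniq [:: m; b] by rewrite /= inE mb.
by have [t [Pt Ut pend_t]] := extend_to_pendant Pb Ub isT; exists (b :: t).
Qed.

Lemma legs_of_cover m (Ls : seq (seq 'I_n)) :
  {in Ls, forall r, path e m r /\ uniq (m :: r)} ->
  pairwise_disjoint Ls ->
  (forall l, pendant e l -> exists2 r, r \in Ls & last m r = l) ->
  {in Ls, forall r, leg m r}.
Proof.
move=> simple disj cover r rLs; have [P U] := simple r rLs; split=> // l pend_l.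
have [r' r'Ls <-] := cover l pend_l.
have [->|r'r] := eqVneq r' r; [by left | right].
by have [P' U'] := simple r' r'Ls; exists r'; split=> //; apply: disj.
Qed.

(* The three neighbours of m lead to three leaves, which must be all the leaves. *)
Lemma spider_legs m u1 u2 u3 : major e m ->
  (forall v, pendant e v -> v \in [:: u1; u2; u3]) ->
  exists Ls : seq (seq 'I_n), [/\ {in Ls, forall r, leg m r},
    pairwise_disjoint Ls
    & forall l, pendant e l -> exists2 r, r \in Ls & last m r = l].
Proof.
move=> major_m leaves.
have [b1 [b2 [b3 [[]]]]] := card_gt2P major_m; rewrite !inE => eb1 eb2 eb3 [b12 b23 b31].
have [q1 [P1 U1 pend1 head1]] := branch_to_pendant eb1.
have [q2 [P2 U2 pend2 head2]] := branch_to_pendant eb2.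
have [q3 [P3 U3 pend3 head3]] := branch_to_pendant eb3.
have simple : {in [:: q1; q2; q3], forall r, path e m r /\ uniq (m :: r)}.
  by move=> r; rewrite !inE => /or3P[]/eqP->.
have disj : pairwise_disjoint [:: q1; q2; q3].
  move=> r r'; rewrite !inE => /or3P[]/eqP-> /or3P[]/eqP->; rewrite ?eqxx // => _;
  by apply: (disjoint_branches (m := m)); rewrite // ?head1 ?head2 ?head3 // eq_sym.
have cover l : pendant e l -> exists2 r, r \in [:: q1; q2; q3] & last m r = l.
  have ends_neq r r' : path e m r -> uniq (m :: r) -> path e m r' -> uniq (m :: r') ->
      head m r != head m r' -> last m r != last m r'.
    move=> P U P' U'; apply: contra => /eqP ends.
    by rewrite (tree_path_unique P P' U U' ends).
  have uniq_ends : uniq [:: last m q1; last m q2; last m q3].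
    rewrite /= !inE !negb_or andbT -andbA.
    by apply/and3P; split; apply: ends_neq; rewrite // ?head1 ?head2 ?head3 // eq_sym.
  have sub_ends : {subset [:: last m q1; last m q2; last m q3] <= [:: u1; u2; u3]}.
    by move=> l' ends_l'; apply: leaves; move: ends_l'; rewrite !inE => /or3P[]/eqP->.
  have [_ ends_eq] := uniq_min_size uniq_ends sub_ends (leqnn 3).
  move/leaves; rewrite -ends_eq !inE => /or3P[]/eqP->.
  - by exists q1; rewrite ?inE ?eqxx.
  - by exists q2; rewrite ?inE ?eqxx ?orbT.
  - by exists q3; rewrite ?inE ?eqxx ?orbT.
by exists [:: q1; q2; q3]; split=> //; apply: legs_of_cover.
Qed.

Lemma dist_to_last m r v : path e m r -> uniq (m :: r) -> v \in m :: r ->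
  dist e v (last m r) = size r - index v (m :: r).
Proof.
move=> P U vr; rewrite -(last_path_from vr) -size_path_from.
exact: dist_simple_path (path_from_path P vr) (uniq_path_from U vr).
Qed.

Lemma mem_on_path k m v r : on_path e k m v ->
  path e m r -> uniq (m :: r) -> last m r = k -> v \in m :: r.
Proof.
case=> p [Pp last_p Up vp] P U last_r.
have [q [Pq Uq last_q rev_q]] := rev_simple_path Pp Up.
rewrite last_p in Pq Uq last_q rev_q.
have <- := tree_path_unique Pq P Uq U (etrans last_q (esym last_r)).
by rewrite rev_q mem_rev.
Qed.

Lemma branch_neighbour_head m r w : path e m r -> uniq (m :: r) ->
  w \in r -> e m w -> w = head m r.
Proof.
move=> P U wr emw.
have mw : m != w by apply: contraTneq U => ->; rewrite /= wr.
have wmr : w \in m :: r by rewrite inE wr orbT.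
have := index_adjacent P U (mem_head m r) wmr emw.
rewrite /= eqxx (negPf mw) => /(_ isT) [idx_w].
by rewrite -(nth_index m wr) idx_w; case: (r).
Qed.
End TreePaths.

Local Open Scope ring_scope.

Section LeafWave.
Variable R : nzRingType.

(* Values of a 1-eigenvector along a pendant path, [d] being the distance to the leaf:
   the eigen-equation reads [x (d + 1) = x d - x (d - 1)], giving the 6-periodic
   sequence 1, 0, -1, -1, 0, 1. *)
Fixpoint leaf_wave (d : nat) : R :=
  if d is d1.+1 then (if d1 is d2.+1 then leaf_wave d1 - leaf_wave d2 else 0) else 1.

Lemma leaf_waveSS d : leaf_wave d.+2 = leaf_wave d.+1 - leaf_wave d.
Proof. by []. Qed.

Lemma leaf_wave_rec d : (0 < d)%N -> leaf_wave d = leaf_wave d.+1 + leaf_wave d.-1.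
Proof. by case: d => // d _; rewrite leaf_waveSS subrK. Qed.

Lemma leaf_wave_add3 d : leaf_wave (d + 3) = - leaf_wave d.
Proof. by rewrite !addnS addn0 !leaf_waveSS addrAC subrr add0r. Qed.

Lemma leaf_wave_mod3 d : leaf_wave d = (-1) ^+ (d %/ 3)%N * leaf_wave (d %% 3)%N.
Proof.
rewrite {1}(divn_eq d 3) addnC; elim: (d %/ 3)%N => [|k IHk].
  by rewrite mul0n addn0 mul1r.
by rewrite mulSnr addnA leaf_wave_add3 IHk exprS mulN1r mulNr.
Qed.

Lemma leaf_wave_mod1 d : (d = 1 %[mod 3])%N -> leaf_wave d = 0.
Proof. by move=> d1; rewrite leaf_wave_mod3 d1 mulr0. Qed.

Lemma leaf_wave_mod0_sqr d : (d = 0 %[mod 3])%N -> leaf_wave d * leaf_wave d = 1.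
Proof.
move=> d0; rewrite leaf_wave_mod3 d0 mulr1 -expr2 -exprM mulnC exprM sqrrN.
by rewrite !expr1n.
Qed.

End LeafWave.

Lemma laplacian_col (R : nzRingType) n (e : rel 'I_n) (g : 'I_n -> R) i :
  (laplacian e R *m \col_j g j) i 0 = (deg e i)%:R * g i - \sum_(w in [set w | e i w]) g w.
Proof.
rewrite !mxE; under eq_bigr => k _ do rewrite /laplacian !mxE mulrBl.
rewrite sumrB (bigD1 i) //= eqxx mul1r big1 ?addr0; last first.
  by move=> k; rewrite eq_sym => /negPf ->; rewrite !mul0r.
congr (_ - _); rewrite [RHS]big_mkcond; apply: eq_bigr => k _.
by rewrite inE; case: (e i k); rewrite ?mul1r ?mul0r.
Qed.

Section LegEigen.
Variables (n : nat) (e : rel 'I_n).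
Hypotheses (e_sym : symmetric e) (e_irr : irreflexive e) (e_acyclic : acyclic e).

Lemma leg_edgeE m r v z : leg e m r -> v \in r ->
  e v z = (z == nth m (m :: r) (index v (m :: r)).-1)
          || (index v (m :: r) < size r)%N && (z == nth m (m :: r) (index v (m :: r)).+1).
Proof.
move=> legr vr; have [P U _] := legr.
have vmr : v \in m :: r by rewrite inE vr orbT.
have mv : m != v by apply: contraTneq U => ->; rewrite /= vr.
have p_le : (index v (m :: r) <= size r)%N by apply: index_le_size.
have p_gt0 : (0 < index v (m :: r))%N by rewrite /= (negPf mv).
set p := index v (m :: r) in p_le p_gt0 *.
have nth_p : nth m (m :: r) p = v by apply: nth_index.
apply/idP/idP => [evz | /orP[/eqP-> | /andP[lt_p /eqP->]]]; last 2 first.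
- have lt_pred : (p.-1 < size r)%N by rewrite -ltnS (prednK p_gt0).
  have := (pathP m P) _ lt_pred.
  by rewrite -[nth m r p.-1]/(nth m (m :: r) p.-1.+1) (prednK p_gt0) nth_p e_sym.
- by have := pathP m P p lt_p; rewrite nth_p.
have zmr := leg_neighbour e_sym e_irr e_acyclic legr vr evz.
case: (ltngtP (index z (m :: r)) p) => [lt_zv | lt_vz | eq_zv].
- have := index_adjacent e_sym e_acyclic P U zmr vmr _ lt_zv.
  by rewrite -/p e_sym evz => /(_ isT) ->; rewrite /= nth_index ?eqxx.
- have idx_z := index_adjacent e_sym e_acyclic P U vmr zmr evz lt_vz; rewrite -/p in idx_z.
  have := index_le_size zmr; rewrite idx_z => ->.
  by rewrite -idx_z nth_index ?eqxx ?orbT.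
- by move: evz; rewrite -(nth_index m zmr) eq_zv nth_p e_irr.
Qed.

Variable R : nzRingType.

Lemma leg_laplacian m r (a : R) (g : 'I_n -> R) : leg e m r ->
  (forall w, w \in m :: r -> g w = a * leaf_wave R (size r - index w (m :: r))) ->
  {in r, forall v, (deg e v)%:R * g v - \sum_(w in [set w | e v w]) g w = g v}.
Proof.
move=> legr g_leg v vr; have [_ U _] := legr.
have vmr : v \in m :: r by rewrite inE vr orbT.
have mv : m != v by apply: contraTneq U => ->; rewrite /= vr.
have p_le : (index v (m :: r) <= size r)%N by apply: index_le_size.
have p_gt0 : (0 < index v (m :: r))%N by rewrite /= (negPf mv).
have nbrs z := leg_edgeE z legr vr.
set p := index v (m :: r) in p_le p_gt0 nbrs *.
set prev := nth m (m :: r) p.-1 in nbrs.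
have lt_pred : (p.-1 < size (m :: r))%N by rewrite /= ltnS (leq_trans (leq_pred p)).
have g_v : g v = a * leaf_wave R (size r - p) by rewrite g_leg.
have g_prev : g prev = a * leaf_wave R (size r - p).+1.
  rewrite g_leg ?mem_nth // index_uniq //.
  by congr (_ * leaf_wave R _); move: p_gt0 p_le; lia.
rewrite /deg; have [lt_p | ge_p] := ltnP p (size r).
- rewrite lt_p /= in nbrs; set next := nth m (m :: r) p.+1 in nbrs.
  have lt_succ : (p.+1 < size (m :: r))%N by [].
  have g_next : g next = a * leaf_wave R (size r - p).-1.
    rewrite g_leg ?mem_nth // index_uniq //.
    by congr (_ * leaf_wave R _); move: lt_p; lia.
  have prev_next : prev != next.
    by apply/eqP => /(congr1 (index^~ (m :: r))); rewrite !index_uniq //; lia.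
  have -> : [set w | e v w] = [set prev; next].
    by apply/setP => z; rewrite !inE nbrs.
  rewrite cards2 prev_next big_setU1 ?inE //= big_set1.
  rewrite g_v g_prev g_next (@leaf_wave_rec R (size r - p)) ?subn_gt0 //.
  by rewrite mulrDr mulr_natl mulr2n addrK.
- rewrite ltnNge ge_p /= in nbrs.
  have -> : [set w | e v w] = [set prev] by apply/setP => z; rewrite !inE nbrs orbF.
  rewrite cards1 big_set1 g_v g_prev.
  have -> : (size r - p = 0)%N by move: p_le ge_p; lia.
  by rewrite /= mulr0 subr0 mul1r.
Qed.
End LegEigen.

Section SpiderVector.
Variables (R : nzRingType) (n : nat) (e : rel 'I_n).
Hypotheses (e_sym : symmetric e) (e_irr : irreflexive e) (e_acyclic : acyclic e).
Variables (m : 'I_n) (r1 r2 : seq 'I_n).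
Hypotheses (leg1 : leg e m r1) (leg2 : leg e m r2) (r12 : {in r1, forall y, y \notin r2}).
Hypotheses (size1 : (size r1 = 1 %[mod 3])%N) (size2 : (size r2 = 1 %[mod 3])%N).

(* Chosen so that the values next to m on the two legs cancel. *)
Definition spider_weight : R := - (leaf_wave R (size r1).-1 * leaf_wave R (size r2).-1).

Definition spider_fun (i : 'I_n) : R :=
  if i \in r1 then leaf_wave R (size r1 - index i (m :: r1))
  else if i \in r2 then spider_weight * leaf_wave R (size r2 - index i (m :: r2))
  else 0.

Definition spider_vec : 'cV[R]_n := \col_i spider_fun i.

Let r21 : {in r2, forall y, y \notin r1}.
Proof. by move=> y yr2; apply: contraL yr2; apply: r12. Qed.

Let m_notin r : leg e m r -> m \notin r.
Proof. by case=> _ /andP[]. Qed.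

Let spider_fun_m : spider_fun m = 0.
Proof. by rewrite /spider_fun (negPf (m_notin leg1)) (negPf (m_notin leg2)). Qed.

Let spider_fun_leg1 w : w \in m :: r1 ->
  spider_fun w = 1 * leaf_wave R (size r1 - index w (m :: r1)).
Proof.
rewrite mul1r inE => /orP[/eqP-> | wr1]; last by rewrite /spider_fun wr1.
by rewrite spider_fun_m /= eqxx subn0 leaf_wave_mod1.
Qed.

Let spider_fun_leg2 w : w \in m :: r2 ->
  spider_fun w = spider_weight * leaf_wave R (size r2 - index w (m :: r2)).
Proof.
rewrite inE => /orP[/eqP-> | wr2]; last by rewrite /spider_fun (negPf (r21 wr2)) wr2.
by rewrite spider_fun_m /= eqxx subn0 leaf_wave_mod1 ?mulr0.
Qed.

Let leg_head r : leg e m r -> (size r = 1 %[mod 3])%N ->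
  [/\ head m r \in r, e m (head m r) & index (head m r) (m :: r) = 1%N].
Proof.
case: r => [//|h r] [P U _] _; split; first exact: mem_head.
- by case/andP: P.
- by move: U; rewrite /= inE negb_or eq_sym => /andP[/andP[/negPf-> _] _]; rewrite eqxx.
Qed.

Let spider_fun_center :
  (deg e m)%:R * spider_fun m - \sum_(w in [set w | e m w]) spider_fun w = spider_fun m.
Proof.
have [[P1 U1 _] [P2 U2 _]] := (leg1, leg2).
have [h1r1 emh1 idx_h1] := leg_head leg1 size1.
have [h2r2 emh2 idx_h2] := leg_head leg2 size2.
have h21 : head m r2 != head m r1 by apply: contraTneq h2r2 => ->; apply: r12.
rewrite spider_fun_m mulr0 sub0r (bigD1 (head m r1)) ?inE //.
rewrite (bigD1 (head m r2)) ?inE ?emh2 ?h21 //= big1 ?addr0; last first.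
  move=> w /andP[/andP[]]; rewrite inE => emw wh1 wh2; rewrite /spider_fun.
  case: ifP => [wr1|_].
    by rewrite (branch_neighbour_head e_sym e_acyclic P1 U1 wr1 emw) eqxx in wh1.
  case: ifP => [wr2|//].
  by rewrite (branch_neighbour_head e_sym e_acyclic P2 U2 wr2 emw) eqxx in wh2.
rewrite /spider_fun h1r1 (negPf (r21 h2r2)) h2r2 idx_h1 idx_h2 !subn1 /spider_weight.
rewrite mulNr -mulrA leaf_wave_mod0_sqr ?mulr1 ?subrr ?oppr0 //.
by move: size2; lia.
Qed.

Let spider_fun_off i : i \notin r1 -> i \notin r2 -> i != m ->
  (deg e i)%:R * spider_fun i - \sum_(w in [set w | e i w]) spider_fun w = spider_fun i.
Proof.
move=> ir1 ir2 im; rewrite /spider_fun (negPf ir1) (negPf ir2) mulr0 sub0r.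
rewrite big1 ?oppr0 // => w; rewrite inE => eiw.
have off_leg r : leg e m r -> i \notin r -> w \notin r.
  move=> legr; apply: contra => wr; have ewi : e w i by rewrite e_sym.
  by have := leg_neighbour e_sym e_irr e_acyclic legr wr ewi; rewrite inE (negPf im).
by rewrite (negPf (off_leg r1 leg1 ir1)) (negPf (off_leg r2 leg2 ir2)).
Qed.

Lemma spider_vec_eigen : laplacian e R *m spider_vec = spider_vec.
Proof.
apply/matrixP => i j; rewrite ord1 laplacian_col mxE.
have [ir1|ir1] := boolP (i \in r1).
  exact: (leg_laplacian e_sym e_irr e_acyclic leg1 spider_fun_leg1).
have [ir2|ir2] := boolP (i \in r2).
  exact: (leg_laplacian e_sym e_irr e_acyclic leg2 spider_fun_leg2).
have [->|im] := eqVneq i m; first exact: spider_fun_center.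
exact: spider_fun_off.
Qed.

Lemma spider_vec_neq0 : spider_vec != 0.
Proof.
have [_ U1 _] := leg1.
have last1 : last m r1 \in r1 by case: (r1) size1 => [//|h s] _; rewrite /= mem_last.
apply/eqP => /matrixP /(_ (last m r1) 0); rewrite !mxE /spider_fun last1.
by rewrite index_last // subnn; apply/eqP/oner_neq0.
Qed.

Lemma spider_fun_vanish r v : leg e m r ->
  (r != r1 -> {in r, forall y, y \notin r1}) -> (r != r2 -> {in r, forall y, y \notin r2}) ->
  v \in m :: r -> (size r - index v (m :: r) = 1 %[mod 3])%N -> spider_fun v = 0.
Proof.
move=> legr disj1 disj2 vmr dist_v.
have leg_of_v r' : (r != r' -> {in r, forall y, y \notin r'}) -> leg e m r' -> v \in r' -> r = r'.
  move=> disj legr' vr'; apply/eqP; apply: contraT => /disj vr_out.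
  move: vmr; rewrite inE => /orP[/eqP v_m | /vr_out]; last by rewrite vr'.
  by move: (m_notin legr'); rewrite -v_m vr'.
rewrite /spider_fun; case: ifP => [vr1|_].
  by rewrite -(leg_of_v r1 disj1 leg1 vr1) leaf_wave_mod1.
case: ifP => [vr2|//].
by rewrite -(leg_of_v r2 disj2 leg2 vr2) leaf_wave_mod1 ?mulr0.
Qed.

End SpiderVector.

Theorem mainTheorem5 (R : realFieldType) (n : nat) (e : rel 'I_n)
    (u1 u2 u3 m : 'I_n) :
  symmetric e -> irreflexive e -> is_tree e ->
  pendant e u1 -> pendant e u2 -> pendant e u3 -> uniq [:: u1; u2; u3] ->
  (forall v, pendant e v -> v \in [:: u1; u2; u3]) ->
  major e m ->
  dist e u1 m = 1 %[mod 3] -> dist e u2 m = 1 %[mod 3] ->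
  exists x : 'cV[R]_n,
    [/\ x != 0, laplacian e R *m x = 1 *: x &
        forall k v : 'I_n, k \in [:: u1; u2; u3] -> on_path e k m v ->
          dist e v k = 1 %[mod 3] -> x v 0 = 0].
Proof.
move=> e_sym e_irr [_ e_acyclic] leaf1 leaf2 leaf3 uniq_u leaves major_m dist1 dist2.
have [Ls [legs disj cover]] := spider_legs e_sym e_irr e_acyclic major_m leaves.
have [r1 r1Ls end1] := cover u1 leaf1.
have [r2 r2Ls end2] := cover u2 leaf2.
have [leg1 leg2] := (legs r1 r1Ls, legs r2 r2Ls).
have [[P1 U1 _] [P2 U2 _]] := (leg1, leg2).
have size1 : (size r1 = 1 %[mod 3])%N.
  by rewrite -(dist_to_start e_sym e_acyclic P1 U1) end1.
have size2 : (size r2 = 1 %[mod 3])%N.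
  by rewrite -(dist_to_start e_sym e_acyclic P2 U2) end2.
have r12 : r1 != r2.
  by apply: contraTneq uniq_u => eq12; rewrite -end1 -end2 eq12 /= inE eqxx.
exists (spider_vec R m r1 r2); split.
- exact: spider_vec_neq0 leg1 size1.
- by rewrite scale1r (spider_vec_eigen _ e_sym e_irr e_acyclic leg1 leg2 (disj _ _ r1Ls r2Ls r12)).
move=> k v k_leaf v_path dist_v.
have [rk rkLs endk] : exists2 r, r \in Ls & last m r = k.
  by apply: cover; move: k_leaf; rewrite !inE => /or3P[]/eqP->.
have [Pk Uk _] := legs rk rkLs.
have v_rk := mem_on_path e_sym e_acyclic v_path Pk Uk endk.
rewrite -endk (dist_to_last e_sym e_acyclic Pk Uk v_rk) in dist_v.
by rewrite mxE (spider_fun_vanish _ leg1 leg2 (legs rk rkLs) (disj _ _ rkLs r1Ls)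
  (disj _ _ rkLs r2Ls) v_rk dist_v).
Qed.
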